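(* Let $\mathbf c$ be a cluster in $\mathrm{CEG}(\mathcal Q)$ and let $i\neq j$ be vertices of $Q_{\mathbf c}$, with local twists $t_i,t_j$ at $\mathbf c$. If there is no arrow between $i$ and $j$ in $Q_{\mathbf c}$, then $t_it_j=t_jt_i$ in $\pi_1(\mathrm{ceg}(\mathcal Q),\mathbf c)$. If there is exactly one arrow between $i$ and $j$, then $t_it_jt_i=t_jt_it_j$ in $\pi_1(\mathrm{ceg}(\mathcal Q),\mathbf c)$.
   Context: Let $(Q,W)$ be a non-degenerate quiver with potential: $Q$ has no loops or oriented 2-cycles and every quiver with potential obtained from it by iterated Derksen–Weyman–Zelevinsky mutation again has none (so underlying quivers change by ordinary quiver mutation). Let $\Gamma=\Gamma(Q,W)$ be its Ginzburg dg algebra (degree 3, assumed Jacobi-finite) and $\mathcal C(\Gamma)=\operatorname{per}\Gamma/D_{fd}(\Gamma)$ its (Amiot) cluster category. A cluster is a cluster tilting set in $\mathcal C(\Gamma)$; each object of a cluster can be mutated; $Q_{\mathbf c}$ denotes the Gabriel quiver of $\operatorname{End}(\bigoplus_{M\in\mathbf c}M)$, whose vertices are the objects of $\mathbf c$, and mutation of clusters induces quiver mutation. The canonical cluster $\mathbf c_\Gamma$ is the image of the indecomposable summands of $\Gamma$ ($Q_{\mathbf c_\Gamma}=Q$). Let $\mathcal Q$ be the mutation class of $(Q,W)$. The unoriented cluster exchange graph $\underline{\mathrm{CEG}}(\mathcal Q)$ has vertices the clusters reachable from $\mathbf c_\Gamma$ by iterated mutation and edges the mutations; the oriented cluster exchange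 graph $\mathrm{CEG}(\mathcal Q)$ replaces each edge $\mathbf c - \mu_i\mathbf c$ by the two oriented edges $\mathbf c\to\mu_i\mathbf c$ and $\mu_i\mathbf c\to\mathbf c$ (forward mutations). Paths are composed left to right. The local twist $t_i$ at $\mathbf c$ (for a vertex $i$ of $Q_{\mathbf c}$) is the loop $\mathbf c\to\mu_i\mathbf c\to\mathbf c$ composed of the two forward mutations of the edge $\mu_i$. The cluster exchange groupoid $\mathrm{ceg}(\mathcal Q)$ is the quotient of the path groupoid of $\mathrm{CEG}(\mathcal Q)$ (objects the vertices; morphisms generated by the edges and their formal inverses) by the following relations, imposed for every cluster $\mathbf c$ and every ordered pair of distinct vertices $i,j$ of $Q_{\mathbf c}$ with no arrow from $i$ to $j$. Put $\mathbf c'=\mu_j\mathbf c$ and consider the path $\mu_i\mathbf c - \mathbf c - \mathbf c' - \mu_i\mathbf c'$ in $\underline{\mathrm{CEG}}$; write $x$ for each forward mutation in the direction $\mu_i\mathbf c\to\mathbf c\to\mathbf c'\to\mu_i\mathbf c'$ and $y$ for each forward mutation in the opposite direction (so at $\mathbf c$, $t_i=yx$ and $t_j=xy$). (1) Hexagonal relation: $x^2y=yx^2$ (as morphisms $\mathbf c\to\mathbf c'$). (2) If there is also no arrow from $j$ to $i$, the clusters $\mathbf c,\mu_j\mathbf c,\mu_i\mu_j\mathbf c=\mu_j\mu_i\mathbf c,\mu_i\mathbf c$ form a 4-cycle; labelling by $x$ the forward mutations around it in the direction starting $\mathbf c\to\mu_j\mathbf c$ and by $y$ those in the other direction, impose $x^2=y^2$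 (paths from $\mathbf c$). (3) If there is exactly one arrow from $j$ to $i$, the clusters obtained from $\mathbf c$ by alternately mutating at $i$ and $j$ form a 5-cycle; with the analogous labelling impose $x^2=y^3$ (paths from $\mathbf c$). *)

From mathcomp Require Import all_boot.
Set Implicit Arguments. Unset Strict Implicit. Unset Printing Implicit Defensive.

(* An abstract (oriented) cluster exchange graph, modelled on CEG(Q) of a
   non-degenerate quiver with potential. *)
Record ExchangeGraph := {
  Obj : eqType;
  Cl : Type;
  inc : Cl -> Obj -> bool;
  mu : Cl -> Obj -> Cl;
  ex : Cl -> Obj -> Obj;
  arr : Cl -> Obj -> Obj -> nat;
  base : Cl;
  reach_all : forall P : Cl -> Prop, P base ->
      (forall c x, P c -> inc c x -> P (mu c x)) -> forall c, P c;
  inc_mu : forall c k y, inc c k ->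
      inc (mu c k) y = (y == ex c k) || (inc c y && (y != k));
  ex_new : forall c k, inc c k -> ~~ inc c (ex c k);
  mu_inv : forall c k, inc c k -> mu (mu c k) (ex c k) = c;
  ex_inv : forall c k, inc c k -> ex (mu c k) (ex c k) = k;
  arr_supp : forall c x y, 0 < arr c x y -> inc c x && inc c y;
  no_loop : forall c x, arr c x x = 0;
  no_2cyc : forall c x y, arr c x y = 0 \/ arr c y x = 0;
  (* mutation of clusters induces (Fomin-Zelevinsky) quiver mutation *)
  arr_mu : forall c k x y, inc c k -> inc (mu c k) x -> inc (mu c k) y ->
      arr (mu c k) x y =
        if x == ex c k then (if y == ex c k then 0 else arr c y k)
        else if y == ex c k then arr c k x
        else (arr c x y + arr c x k * arr c k y)
               - (arr c y x + arr c y k * arr c k x);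
  square : forall c i j, inc c i -> inc c j -> i != j ->
      arr c i j = 0 -> arr c j i = 0 -> mu (mu c j) i = mu (mu c i) j;
  pentagon : forall c i j, inc c i -> inc c j -> i != j ->
      arr c i j = 0 -> arr c j i = 1 ->
      let c1 := mu c j in let j1 := ex c j in
      let c2 := mu c1 i in let i1 := ex c1 i in
      let c3 := mu c2 j1 in let j2 := ex c2 j1 in
      let c4 := mu c3 i1 in
      mu c4 j2 = c
}.

Section Groupoid.
Variable D : ExchangeGraph.

(* A letter (c, x, false) is the forward mutation c -> mu c x (x in c);
   (c, x, true) is its formal inverse. *)
Definition letter := (Cl D * Obj D * bool)%type.
Definition src (l : letter) : Cl D :=
  let: (c, x, b) := l in if b then mu c x else c.
Definition tgt (l : letter) : Cl D :=
  let: (c, x, b) := l in if b then c else mu c x.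
Definition fe (c : Cl D) (x : Obj D) : letter := (c, x, false).
Definition ie (c : Cl D) (x : Obj D) : letter := (c, x, true).

(* w is a path in the path groupoid of CEG from a to b (composed left to right) *)
Fixpoint is_path (a : Cl D) (w : seq letter) (b : Cl D) : Prop :=
  match w with
  | [::] => a = b
  | l :: w' => inc l.1.1 l.1.2 /\ src l = a /\ is_path (tgt l) w' b
  end.

Definition twist (c : Cl D) (i : Obj D) : seq letter :=
  [:: fe c i; fe (mu c i) (ex c i)].

(* defining relations of the path groupoid and of ceg(Q) (one direction) *)
Inductive rel0 : seq letter -> seq letter -> Prop :=
  | rel_cancel_r c x : inc c x -> rel0 [:: fe c x; ie c x] [::]
  | rel_cancel_l c x : inc c x -> rel0 [:: ie c x; fe c x] [::]
  | rel_hex c i j : inc c i -> inc c j -> i != j -> arr c i j = 0 ->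
      let c' := mu c j in
      rel0 [:: fe c j; fe c' i; fe (mu c' i) (ex c' i)]
           [:: fe c i; fe (mu c i) (ex c i); fe c j]
  | rel_square c i j : inc c i -> inc c j -> i != j ->
      arr c i j = 0 -> arr c j i = 0 ->
      rel0 [:: fe c j; fe (mu c j) i] [:: fe c i; fe (mu c i) j]
  | rel_pent c i j : inc c i -> inc c j -> i != j ->
      arr c i j = 0 -> arr c j i = 1 ->
      let c1 := mu c j in let j1 := ex c j in
      let c2 := mu c1 i in let i1 := ex c1 i in
      let c3 := mu c2 j1 in let j2 := ex c2 j1 in
      let c4 := mu c3 i1 in
      rel0 [:: fe c j; fe c1 i]
           [:: fe c (ex c4 j2); fe c4 (ex c3 i1); fe c3 (ex c2 j1)].

Definition rel1 (u v : seq letter) : Prop := rel0 u v \/ rel0 v u.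

Definition step (w w' : seq letter) : Prop :=
  exists p s u v, rel1 u v /\ w = p ++ u ++ s /\ w' = p ++ v ++ s.

(* equality of morphisms a -> b in ceg(Q): the equivalence on paths a -> b
   generated by (contextual) application of the defining relations *)
Inductive ceg_eq (a b : Cl D) : seq letter -> seq letter -> Prop :=
  | ceg_refl w : is_path a w b -> ceg_eq a b w w
  | ceg_step w w' w'' : ceg_eq a b w w' -> step w' w'' -> is_path a w'' b ->
      ceg_eq a b w w''.

End Groupoid.

From mathcomp Require Import all_boot zify.

Set Implicit Arguments. Unset Strict Implicit. Unset Printing Implicit Defensive.

(* Mutating at one end of a pair of vertices keeps the number of arrows between
   them, with the new object in place of the mutated one.  Hence two vertices
   without arrows stay so after mutation at j, and two hexagonal relations (at c
   and at mu_j c) slide t_i past t_j.  For a single arrow, the alternating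
   mutations run around the pentagon c, c1, ..., c4 through clusters that again
   carry a single arrow; the pentagon closes with i exchanged back at c4 and j at
   c3, so the twists at i and j are words in the ten forward mutations around it,
   and four hexagonal relations together with the pentagon relations at c and
   at c3 turn t_i t_j t_i into t_j t_i t_j. *)

Section Mutation.
Variable D : ExchangeGraph.
Implicit Types (c : Cl D) (i j k y : Obj D).

Lemma inc_mu_ex c k : inc c k -> inc (mu c k) (ex c k).
Proof. by move=> hk; rewrite inc_mu // eqxx. Qed.

Lemma inc_mu_neq c k y : inc c k -> inc c y -> y != k -> inc (mu c k) y.
Proof. by move=> hk hy yk; rewrite inc_mu // hy yk orbT. Qed.

Lemma ex_neq c k y : inc c k -> inc c y -> ex c k != y.
Proof. by move=> hk hy; apply: contraNneq (ex_new hk) => ->. Qed.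

Lemma arr_mu_exl c k y : inc c k -> inc c y -> y != k ->
  arr (mu c k) (ex c k) y = arr c y k.
Proof.
move=> hk hy yk.
by rewrite arr_mu ?inc_mu_ex ?inc_mu_neq // eqxx eq_sym (negbTE (ex_neq hk hy)).
Qed.

Lemma arr_mu_exr c k y : inc c k -> inc c y -> y != k ->
  arr (mu c k) y (ex c k) = arr c k y.
Proof.
move=> hk hy yk.
by rewrite arr_mu ?inc_mu_ex ?inc_mu_neq // eqxx eq_sym (negbTE (ex_neq hk hy)).
Qed.

Definition arrow_pair c i j (m n : nat) :=
  [/\ inc c i, inc c j, i != j, arr c i j = m & arr c j i = n].

Lemma arrow_pair_sym c i j m n : arrow_pair c i j m n -> arrow_pair c j i n m.
Proof. by case=> hi hj ij hm hn; split; rewrite // eq_sym. Qed.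

Lemma arrow_pair_mu c i j m n :
  arrow_pair c i j m n -> arrow_pair (mu c j) (ex c j) i m n.
Proof.
case=> hi hj ij hm hn; split.
- exact: inc_mu_ex.
- exact: inc_mu_neq.
- exact: ex_neq.
- by rewrite arr_mu_exl.
- by rewrite arr_mu_exr.
Qed.

End Mutation.

Section Paths.
Variable D : ExchangeGraph.
Implicit Types (a b c : Cl D) (w p s u v : seq (letter D)).

Lemma is_path_cat a u v b :
  is_path a (u ++ v) b <-> exists2 m, is_path a u m & is_path m v b.
Proof.
elim: u a => [|l u IHu] a /=; first by split=> [|[m ->]]; [exists a|].
split=> [[hl [<- /IHu [m hu hv]]]|[m [hl [<- hu]] hv]]; first by exists m.
by do 2!split=> //; apply/IHu; exists m.
Qed.

Lemma is_path_cat_loop a u v :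
  is_path a u a -> is_path a v a -> is_path a (u ++ v) a.
Proof. by move=> hu hv; apply/is_path_cat; exists a. Qed.

Lemma is_path_fun a w b b' : is_path a w b -> is_path a w b' -> b = b'.
Proof.
elim: w a => [|l w IHw] a /=; first by move=> <- <-.
by case=> _ [_ /IHw hw] [_ [_ /hw]].
Qed.

Lemma twist_path c i : inc c i -> is_path c (twist c i) c.
Proof. by move=> hi; rewrite /= mu_inv // inc_mu_ex. Qed.

(* The cancellation relations must be excluded: [::] is a path at every cluster. *)
Lemma rel0_parallel u v : rel0 u v -> u <> [::] -> v <> [::] ->
  exists a b, is_path a u b /\ is_path a v b.
Proof.
case=> [c x _ _ /(_ erefl) []|c x _ _ /(_ erefl) []
       |c i j hi hj ij h0 c'|c i j hi hj ij h0 h1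
       |c i j hi hj ij h0 h1 c1 j1 c2 i1 c3 j2 c4] _ _.
- have hi' : inc c' i by exact: inc_mu_neq.
  exists c, c'; rewrite /= !mu_inv //.
  by do !split=> //; exact: inc_mu_ex.
- exists c, (mu (mu c j) i); rewrite /= (square hi hj ij h0 h1).
  by do !split=> //; apply: inc_mu_neq; rewrite // eq_sym.
- have hA1 := arrow_pair_mu (And5 hi hj ij h0 h1 : arrow_pair c i j 0 1).
  have hA2 := arrow_pair_mu hA1; have hA3 := arrow_pair_mu hA2.
  have [_ hc1i _ _ _] := hA1; have [_ hc2j1 _ _ _] := hA2.
  have [_ hc3i1 _ _ _] := hA3; have [_ hc4j2 _ _ _] := arrow_pair_mu hA3.
  have closes : mu c4 j2 = c := pentagon hi hj ij h0 h1.
  have mu_c : mu c (ex c4 j2) = c4 by rewrite -{1}closes mu_inv.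
  exists c, c2; rewrite /= mu_c !mu_inv //.
  do !split=> //; try exact: inc_mu_ex.
  by rewrite -{1}closes; exact: inc_mu_ex.
Qed.

Lemma rel0_path a b u v : rel0 u v -> u <> [::] -> v <> [::] ->
  is_path a u b <-> is_path a v b.
Proof.
move=> R un vn; have [a0 [b0 [pu pv]]] := rel0_parallel R un vn.
have ends w : w <> [::] -> is_path a0 w b0 -> is_path a w b -> a = a0 /\ b = b0.
  case: w => // l w _ [_ [<- hw0]] [_ [<- hw]].
  by split=> //; apply: is_path_fun hw hw0.
by split=> [/(ends _ un pu)|/(ends _ vn pv)] [-> ->].
Qed.

Lemma rel1_path a b u v : rel1 u v -> u <> [::] -> v <> [::] ->
  is_path a u b -> is_path a v b.
Proof. by case=> [/rel0_path R un vn /R|/rel0_path R un vn /R]; apply. Qed.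

Lemma ceg_eq_path a b w w' : ceg_eq a b w w' -> is_path a w' b.
Proof. by case. Qed.

Lemma ceg_eq_trans a b u v w :
  ceg_eq a b u v -> ceg_eq a b v w -> ceg_eq a b u w.
Proof.
move=> huv hvw; elim: hvw huv => // w0 w1 w2 _ IH st P huv.
exact: ceg_step (IH huv) st P.
Qed.

Lemma ceg_eq_sym a b u v : ceg_eq a b u v -> ceg_eq a b v u.
Proof.
elim=> [w P|w w' w'' H IH st P]; first exact: ceg_refl.
apply: ceg_eq_trans (ceg_step (ceg_refl P) _ (ceg_eq_path H)) IH.
have [p [s [u0 [v0 [R [-> ->]]]]]] := st.
by exists p, s, v0, u0; split=> //; case: R; [right|left].
Qed.

Lemma ceg_eq_rewrite a b w p s u v : rel1 u v -> u <> [::] -> v <> [::] ->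
  ceg_eq a b w (p ++ u ++ s) -> ceg_eq a b w (p ++ v ++ s).
Proof.
move=> R un vn H; have /is_path_cat[m hp /is_path_cat[m' hu hs]] := ceg_eq_path H.
apply: ceg_step H _ _; first by exists p, s, u, v.
apply/is_path_cat; exists m => //; apply/is_path_cat; exists m' => //.
exact: rel1_path hu.
Qed.

End Paths.

Section Words.
Variables (D : ExchangeGraph) (a b : Cl D).

Lemma commute_words (x x' y y' z z' : letter D) :
  rel0 [:: y; z; z'] [:: x; x'; y] -> rel0 [:: y'; x; x'] [:: z; z'; y'] ->
  is_path a [:: x; x'; y; y'] b ->
  ceg_eq a b [:: x; x'; y; y'] [:: y; y'; x; x'].
Proof.
move=> hex hex' P.
apply: (ceg_eq_rewrite (p := [:: y]) (s := [::]) (or_intror hex')) => //=.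
apply: (ceg_eq_rewrite (p := [::]) (s := [:: y']) (or_intror hex)) => //=.
exact: ceg_refl.
Qed.

(* [a_k] are the forward mutations around the pentagon in one direction,
   [b_k] those in the other, with [a_k] and [b_(k-1)] leaving the same cluster (indices mod 5). *)
Lemma braid_words (a0 a1 a2 a3 a4 b0 b1 b2 b3 b4 : letter D) :
  rel0 [:: a0; a1; b1] [:: b4; a4; a0] -> rel0 [:: a1; a2; b2] [:: b0; a0; a1] ->
  rel0 [:: a3; a4; b4] [:: b2; a2; a3] -> rel0 [:: a4; a0; b0] [:: b3; a3; a4] ->
  rel0 [:: a0; a1] [:: b4; b3; b2] -> rel0 [:: a3; a4] [:: b2; b1; b0] ->
  is_path a [:: b4; a4; a0; b0; b4; a4] b ->
  ceg_eq a b [:: b4; a4; a0; b0; b4; a4] [:: a0; b0; b4; a4; a0; b0].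
Proof.
move=> hex0 hex1 hex3 hex4 pent0 pent3 P.
apply: (ceg_eq_rewrite (p := [:: a0; b0]) (s := [:: b0]) (or_introl hex0)) => //=.
apply: (ceg_eq_rewrite (p := [:: a0]) (s := [:: b1; b0]) (or_introl hex1)) => //=.
apply: (ceg_eq_rewrite (p := [:: a0; a1; a2]) (s := [::]) (or_introl pent3)) => //=.
apply: (ceg_eq_rewrite (p := [::]) (s := [:: a2; a3; a4]) (or_intror pent0)) => //=.
apply: (ceg_eq_rewrite (p := [:: b4; b3]) (s := [:: a4]) (or_introl hex3)) => //=.
apply: (ceg_eq_rewrite (p := [:: b4]) (s := [:: b4; a4]) (or_introl hex4)) => //=.
exact: ceg_refl.
Qed.

End Words.

Lemma twist_commute (D : ExchangeGraph) (c : Cl D) (i j : Obj D) :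
  arrow_pair c i j 0 0 ->
  ceg_eq c c (twist c i ++ twist c j) (twist c j ++ twist c i).
Proof.
move=> hA; have [hi hj ij h0 _] := hA.
have [hc1i hc1j1 ij1 h01 _] := arrow_pair_sym (arrow_pair_mu hA).
apply: commute_words.
- exact: rel_hex hi hj ij h0.
- by have := rel_hex hc1i hc1j1 ij1 h01; rewrite /= mu_inv.
- exact: is_path_cat_loop (twist_path hi) (twist_path hj).
Qed.

Section Pentagon.
Variables (D : ExchangeGraph) (c : Cl D) (i j : Obj D).
Hypothesis hA : arrow_pair c i j 0 1.

Local Notation c1 := (mu c j).
Local Notation j1 := (ex c j).
Local Notation c2 := (mu c1 i).
Local Notation i1 := (ex c1 i).
Local Notation c3 := (mu c2 j1).
Local Notation j2 := (ex c2 j1).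
Local Notation c4 := (mu c3 i1).
Local Notation i2 := (ex c3 i1).

Let hA1 : arrow_pair c1 j1 i 0 1 := arrow_pair_mu hA.
Let hA2 : arrow_pair c2 i1 j1 0 1 := arrow_pair_mu hA1.
Let hA3 : arrow_pair c3 j2 i1 0 1 := arrow_pair_mu hA2.
Let hA4 : arrow_pair c4 i2 j2 0 1 := arrow_pair_mu hA3.

Lemma pentagon_closes : mu c4 j2 = c.
Proof. by case: hA => *; apply: pentagon. Qed.

Lemma pentagon_inc3 y : inc c y -> y != i -> y != j -> inc c3 y.
Proof.
have [_ hj _ _ _] := hA; have [_ hc1i _ _ _] := hA1; have [_ hc2j1 _ _ _] := hA2.
move=> hy yi yj; have hc1y : inc c1 y := inc_mu_neq hj hy yj.
have hc2y : inc c2 y := inc_mu_neq hc1i hc1y yi.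
by apply: inc_mu_neq hc2j1 hc2y _; rewrite eq_sym ex_neq.
Qed.

(* The object exchanged back into c is i or j, since c and c4 agree outside
   {i, j} and {i2, j2}; it is not j, for otherwise c4 = c1 would contain j1. *)
Lemma pentagon_ex : ex c4 j2 = i.
Proof.
have [_ hj _ _ _] := hA; have [_ hc1i _ _ _] := hA1; have [_ hc2j1 _ _ _] := hA2.
have [_ hc3i1 _ _ _] := hA3; have [_ hc4j2 _ _ _] := hA4.
set e := ex c4 j2.
have hce : inc c e by rewrite -{1}pentagon_closes inc_mu_ex.
have mu_e : mu c e = c4 by rewrite -{1}pentagon_closes mu_inv.
have [//|ei] := eqVneq e i.
have [ej|ej] := eqVneq e j.
  have hc4j1 : inc c4 j1 by rewrite -mu_e ej; apply: inc_mu_ex.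
  have : inc (mu c4 j2) j1 by apply: inc_mu_neq hc4j2 hc4j1 _; rewrite eq_sym ex_neq.
  by rewrite pentagon_closes (negbTE (ex_new hj)).
have hc1e : inc c1 e := inc_mu_neq hj hce ej.
have : inc c4 e by apply: inc_mu_neq hc3i1 (pentagon_inc3 hce ei ej) _; rewrite eq_sym ex_neq.
by rewrite (negbTE (ex_new hc4j2)).
Qed.

Lemma pentagon_ex3 : i2 = j.
Proof.
have [_ hc3i1 _ _ _] := hA3; have [hc4i2 hc4j2 i2j2 _ _] := hA4.
have hci2 : inc c i2 by rewrite -{1}pentagon_closes; apply: inc_mu_neq.
have [//|i2j] := eqVneq i2 j.
have [i2i|i2i] := eqVneq i2 i.
  by move: (ex_new hc4j2); rewrite pentagon_ex -[X in inc _ X]i2i hc4i2.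
by move: (ex_new hc3i1); rewrite pentagon_inc3.
Qed.

Lemma pentagon_mu_i : mu c i = c4.
Proof.
by have [_ hc4j2 _ _ _] := hA4; have := mu_inv hc4j2; rewrite pentagon_closes pentagon_ex.
Qed.

Lemma pentagon_ex_i : ex c i = j2.
Proof.
by have [_ hc4j2 _ _ _] := hA4; have := ex_inv hc4j2; rewrite pentagon_closes pentagon_ex.
Qed.

Lemma twist_braid :
  ceg_eq c c (twist c i ++ twist c j ++ twist c i)
             (twist c j ++ twist c i ++ twist c j).
Proof.
have [hi hj ij h0 h1] := hA; have [hc1j1 hc1i j1i h01 _] := hA1.
have [_ hc2j1 _ _ _] := hA2; have [hc3j2 hc3i1 j2i1 h03 h13] := hA3.
have [hc4i2 hc4j2 i2j2 h04 _] := hA4.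
have P := is_path_cat_loop (twist_path hi)
            (is_path_cat_loop (twist_path hj) (twist_path hi)).
move: P; rewrite /twist pentagon_mu_i pentagon_ex_i => P.
apply: (@braid_words D c c (fe c j) (fe c1 i) (fe c2 j1) (fe c3 i1) (fe c4 j2)
  (fe c1 j1) (fe c2 i1) (fe c3 j2) (fe c4 i2) (fe c i) _ _ _ _ _ _ P).
- by have := rel_hex hi hj ij h0; rewrite /= pentagon_mu_i pentagon_ex_i.
- by have := rel_hex hc1j1 hc1i j1i h01; rewrite /= (mu_inv hj) (ex_inv hj).
- have := rel_hex hc3j2 hc3i1 j2i1 h03.
  by rewrite /= pentagon_closes pentagon_ex (mu_inv hc2j1) (ex_inv hc2j1).
- have := rel_hex hc4i2 hc4j2 i2j2 h04.
  rewrite /= pentagon_closes (mu_inv hc3i1) (ex_inv hc3i1).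
  by rewrite [in X in rel0 X _]pentagon_ex3.
- by have := rel_pent hi hj ij h0 h1; rewrite /= pentagon_ex.
- have := rel_pent hc3j2 hc3i1 j2i1 h03 h13.
  by rewrite /= pentagon_closes pentagon_ex pentagon_ex3.
Qed.

End Pentagon.

Theorem mainTheorem1 (D : ExchangeGraph) (c : Cl D) (i j : Obj D) :
  inc c i -> inc c j -> i != j ->
  (arr c i j = 0 -> arr c j i = 0 ->
     ceg_eq c c (twist c i ++ twist c j) (twist c j ++ twist c i)) /\
  (arr c i j + arr c j i = 1 ->
     ceg_eq c c (twist c i ++ twist c j ++ twist c i)
             (twist c j ++ twist c i ++ twist c j)).
Proof.
move=> hi hj ij; split=> [h0 h1|h1]; first exact/twist_commute.
have [[hij hji]|[hji hij]] :
    (arr c i j = 0 /\ arr c j i = 1) \/ (arr c j i = 0 /\ arr c i j = 1) by lia.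
  exact/twist_braid.
by apply/ceg_eq_sym/twist_braid; split; rewrite // eq_sym.
Qed.
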